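(* Let $H\in(\tfrac12,1)$, $W$ a one-dimensional standard Wiener process, $\tilde B_t=\int_0^t(t-v)^{H-1/2}\,dW_v$, and $R(r,s)=\mathbb{E}\tilde B_r\tilde B_s$. Set $c_1=H-\tfrac12$, $c_3=(H-\tfrac12)(H-\tfrac32)$ and $c_2=-c_3\int_0^\infty u^{H-1/2}(1+u)^{H-5/2}\,du$. Then for $0<r<s$, $$\partial^2_{r,s}R(r,s)=c_1r^{H-1/2}s^{H-3/2}+c_2(s-r)^{2H-2}+c_3\int_r^\infty v^{H-1/2}(s-r+v)^{H-5/2}\,dv.$$
   Context: $\partial^2_{r,s}R=\frac{\partial^2}{\partial r\partial s}R$ denotes the mixed derivative of the covariance function. *)

From Stdlib Require Import Reals.
From Coquelicot Require Import Coquelicot.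
Open Scope R_scope.

(* Real power x^a for x > 0, extended by 0 for x <= 0 (only used with a > 0
   at x = 0, or on sets of measure zero). *)
Definition rpow (x a : R) : R :=
  if Rlt_dec 0 x then Rpower x a else 0.

(* Covariance of the Riemann-Liouville process B~_t = int_0^t (t-v)^(H-1/2) dW_v,
   computed by the Ito (Wiener) isometry:
   R(r,s) = E[B~_r B~_s] = int_0^{min r s} (r-v)^(H-1/2) (s-v)^(H-1/2) dv. *)
Definition RLcov (H r s : R) : R :=
  RInt (fun v => rpow (r - v) (H - 1/2) * rpow (s - v) (H - 1/2)) 0 (Rmin r s).

Definition cst1 (H : R) : R := H - 1/2.
Definition cst3 (H : R) : R := (H - 1/2) * (H - 3/2).
Definition cst2 (H : R) : R :=
  - cst3 H * RInt_gen (fun u => rpow u (H - 1/2) * rpow (1 + u) (H - 5/2))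
                    (at_point 0) (Rbar_locally p_infty).

(* With a = H - 1/2, the substitution v |-> r - v turns the covariance into
   R(r,s) = int_0^r u^a (s - r + u)^a du, whose integrand is smooth in (r,s) for
   u > 0 and r < s.  Differentiating under the integral sign (with the moving
   endpoint in r, then with fixed endpoints in s) gives
   d^2 R = a r^a s^(a-1) - a (a-1) int_0^r u^a (s - r + u)^(a-2) du.
   The substitution u = (s - r) w gives
   int_0^oo u^a (s - r + u)^(a-2) du = (s - r)^(2a-1) int_0^oo w^a (1 + w)^(a-2) dw,
   which converges because the integrand is at most (1 + w)^(2a-2) and 2a - 2 < -1;
   splitting int_0^oo = int_0^r + int_r^oo yields the formula. *)

From Stdlib Require Import Reals Lra.
From Coquelicot Require Import Coquelicot.
Open Scope R_scope.

Lemma locally_gt (c x : R) : c < x -> locally x (fun y => c < y).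
Proof.
  intros Hx. exists (mkposreal _ (proj2 (Rlt_0_minus _ _) Hx)). intros y Hy.
  apply Rabs_lt_between' in Hy. simpl in Hy. lra.
Qed.

Lemma locally_lt (c x : R) : x < c -> locally x (fun y => y < c).
Proof.
  intros Hx. exists (mkposreal _ (proj2 (Rlt_0_minus _ _) Hx)). intros y Hy.
  apply Rabs_lt_between' in Hy. simpl in Hy. lra.
Qed.

(** * Real powers *)

Lemma rpow_Rpower x e : 0 < x -> rpow x e = Rpower x e.
Proof. intros Hx. unfold rpow. destruct (Rlt_dec 0 x); [reflexivity | lra]. Qed.

Lemma rpow_nonpos x e : x <= 0 -> rpow x e = 0.
Proof. intros Hx. unfold rpow. destruct (Rlt_dec 0 x); [lra | reflexivity]. Qed.

Lemma rpow_ge0 x e : 0 <= rpow x e.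
Proof. unfold rpow. destruct (Rlt_dec 0 x); [left; apply exp_pos | lra]. Qed.

Lemma rpow_1 x : 0 < x -> rpow x 1 = x.
Proof. intros Hx. rewrite rpow_Rpower by exact Hx. apply Rpower_1, Hx. Qed.

Lemma rpow_plus x e f : 0 < x -> rpow x (e + f) = rpow x e * rpow x f.
Proof. intros Hx. rewrite !rpow_Rpower by exact Hx. apply Rpower_plus. Qed.

Lemma rpow_mult_distr x y e : 0 < x -> rpow (x * y) e = rpow x e * rpow y e.
Proof.
  intros Hx. destruct (Rle_dec y 0) as [Hy | Hy].
  - rewrite (rpow_nonpos y), (rpow_nonpos (x * y)) by nra. ring.
  - rewrite !rpow_Rpower by nra. symmetry. apply Rpower_mult_distr; lra.
Qed.

Lemma rpow_le x y e : 0 <= e -> x <= y -> rpow x e <= rpow y e.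
Proof.
  intros He Hxy. destruct (Rle_dec x 0).
  - rewrite (rpow_nonpos x) by assumption. apply rpow_ge0.
  - rewrite !rpow_Rpower by lra. apply Rle_Rpower_l; lra.
Qed.

Lemma is_derive_rpow x e : 0 < x -> is_derive (fun y => rpow y e) x (e * rpow x (e - 1)).
Proof.
  intros Hx. rewrite rpow_Rpower by exact Hx.
  apply is_derive_ext_loc with (fun y => Rpower y e).
  - apply filter_imp with (2 := locally_gt 0 x Hx). intros y Hy.
    symmetry. apply rpow_Rpower, Hy.
  - apply is_derive_Reals, derivable_pt_lim_power, Hx.
Qed.

Lemma continuous_rpow_pos x e : 0 < x -> continuous (fun y => rpow y e) x.
Proof.
  intros Hx. apply (ex_derive_continuous (K := R_AbsRing) (V := R_NormedModule)).
  eexists. apply is_derive_rpow, Hx.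
Qed.

Lemma continuous_rpow x e : 0 < e -> continuous (fun y => rpow y e) x.
Proof.
  intros He. destruct (Rtotal_order x 0) as [Hx | [-> | Hx]].
  - apply continuous_ext_loc with (fun _ => 0).
    + apply filter_imp with (2 := locally_lt 0 x Hx). intros y Hy.
      symmetry. apply rpow_nonpos. lra.
    + apply continuous_const.
  - apply filterlim_locally. intros eps.
    (* on (0, eps^(1/e)) the nondecreasing [rpow _ e] stays below eps *)
    assert (Hd : 0 < Rpower eps (/ e)) by apply exp_pos.
    exists (mkposreal _ Hd). intros y Hy. simpl in Hy.
    change (Rabs (rpow y e - rpow 0 e) < eps).
    change (Rabs (y - 0) < Rpower eps (/ e)) in Hy.
    rewrite (rpow_nonpos 0), Rminus_0_r, Rabs_right by (lra || apply Rle_ge, rpow_ge0).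
    rewrite Rminus_0_r in Hy.
    destruct (Rle_dec y 0).
    + rewrite rpow_nonpos by assumption. apply cond_pos.
    + rewrite Rabs_right in Hy by lra. rewrite rpow_Rpower by lra.
      replace (pos eps) with (Rpower (Rpower eps (/ e)) e).
      * apply Rlt_Rpower_l; lra.
      * rewrite Rpower_mult, Rinv_l, Rpower_1 by (apply cond_pos || lra). reflexivity.
  - apply continuous_rpow_pos, Hx.
Qed.

Lemma continuous_rpow_shift z e u : 0 < z + u -> continuous (fun v => rpow (z + v) e) u.
Proof.
  intros Hzu. apply (continuous_comp (fun v => z + v) (fun y => rpow y e)).
  - apply (continuous_plus (fun _ => z) (fun v => v)); [apply continuous_const | apply continuous_id].
  - apply continuous_rpow_pos, Hzu.
Qed.

Lemma is_lim_rpow_pinfty e : e < 0 -> is_lim (fun x => rpow x e) p_infty 0.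
Proof.
  intros He.
  apply is_lim_ext_loc with (fun x => exp (e * ln x)).
  { exists 0. intros x Hx. rewrite rpow_Rpower by lra. reflexivity. }
  apply (is_lim_comp exp (fun x => e * ln x) p_infty 0 m_infty).
  - apply is_lim_exp_m.
  - replace m_infty with (Rbar_mult e p_infty).
    + apply is_lim_scal_l, is_lim_ln_p.
    + simpl. destruct (Rle_dec 0 e); [exfalso; lra | reflexivity].
  - exists 0. intros x _. discriminate.
Qed.

Lemma is_lim_rpow_shifted e : e < 0 -> is_lim (fun b => rpow (1 + b) e) p_infty 0.
Proof.
  intros He.
  apply (is_lim_comp (fun y => rpow y e) (fun b => 1 + b) p_infty 0 p_infty).
  - apply is_lim_rpow_pinfty, He.
  - eapply is_lim_plus; [apply is_lim_const | apply is_lim_id | reflexivity].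
  - exists 0. intros b _. discriminate.
Qed.

Lemma is_derive_rpow_shifted e x : 0 < 1 + x -> e + 1 <> 0 ->
  is_derive (fun u => rpow (1 + u) (e + 1) / (e + 1)) x (rpow (1 + x) e).
Proof.
  intros Hx He.
  apply is_derive_ext with (fun u => / (e + 1) * rpow (1 + u) (e + 1)).
  { intros u. apply Rmult_comm. }
  replace (rpow (1 + x) e) with (/ (e + 1) * (1 * ((e + 1) * rpow (1 + x) (e + 1 - 1))))
    by (replace (e + 1 - 1) with e by ring; field; exact He).
  apply is_derive_scal, (is_derive_comp (fun y => rpow y (e + 1)) (fun u => 1 + u)).
  - apply is_derive_rpow, Hx.
  - auto_derive; [exact I | ring].
Qed.

(** * Integrals over [c, +oo) *)

Lemma is_RInt_gen_pinfty_lim (f : R -> R) c l :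
  (forall b, c <= b -> ex_RInt f c b) ->
  is_RInt_gen f (at_point c) (Rbar_locally p_infty) l <->
  filterlim (fun b => RInt f c b) (Rbar_locally p_infty) (locally l).
Proof.
  intros Hex. split.
  - intros Hf P HP.
    destruct (Hf P HP) as [Q R HQ HR HQR].
    apply filter_imp with (2 := HR). intros y Hy.
    destruct (HQR c y HQ Hy) as [z [Hz HPz]].
    simpl in Hz. rewrite (is_RInt_unique _ _ _ _ Hz). exact HPz.
  - intros Hlim. apply filterlimi_lim_ext_loc with (fun ab => RInt f (fst ab) (snd ab)).
    + exists (fun x => x = c) (fun y => c < y).
      * reflexivity.
      * exists c. auto.
      * intros x y -> Hy. simpl. apply (RInt_correct (V := R_CompleteNormedModule)), Hex. lra.
    + intros P HP.
      exists (fun x => x = c) (fun y => P (RInt f c y)); [reflexivity | exact (Hlim P HP) |].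
      intros x y -> Hy. exact Hy.
Qed.

Lemma is_RInt_gen_pinfty_tail (f : R -> R) c r l :
  is_RInt_gen f (at_point c) (Rbar_locally p_infty) l -> ex_RInt f c r ->
  is_RInt_gen f (at_point r) (Rbar_locally p_infty) (l - RInt f c r).
Proof.
  intros Hl Hr.
  replace (l - RInt f c r) with (plus (RInt f r c) l).
  - apply (is_RInt_gen_Chasles f c); [| exact Hl].
    apply is_RInt_gen_at_point, (RInt_correct (V := R_CompleteNormedModule)).
    apply (ex_RInt_swap (V := R_CompleteNormedModule)), Hr.
  - rewrite <- (opp_RInt_swap (V := R_CompleteNormedModule)) by exact Hr.
    apply Rplus_comm.
Qed.

Lemma RInt_increment_le (f g : R -> R) c u v :
  (forall b, c <= b -> ex_RInt f c b) -> (forall b, c <= b -> ex_RInt g c b) ->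
  (forall x, c <= x -> 0 <= f x <= g x) -> c <= u <= v ->
  0 <= RInt f c v - RInt f c u <= RInt g c v - RInt g c u.
Proof.
  intros Hf Hg Hfg Huv.
  assert (Hfuv : ex_RInt f u v).
  { apply (ex_RInt_Chasles_2 (V := R_CompleteNormedModule)) with c; [lra | apply Hf; lra]. }
  assert (Hguv : ex_RInt g u v).
  { apply (ex_RInt_Chasles_2 (V := R_CompleteNormedModule)) with c; [lra | apply Hg; lra]. }
  rewrite <- (RInt_Chasles f c u v) by first [exact Hfuv | apply Hf; lra].
  rewrite <- (RInt_Chasles g c u v) by first [exact Hguv | apply Hg; lra].
  change plus with Rplus. rewrite !Rplus_minus_l.
  split.
  - apply RInt_ge_0; [lra | exact Hfuv |]. intros x Hx. apply Hfg. lra.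
  - apply RInt_le; [lra | exact Hfuv | exact Hguv |]. intros x Hx. apply Hfg. lra.
Qed.

(* Cauchy criterion: the increments of [int_c^b f] are dominated by those of [int_c^b g]. *)
Lemma ex_RInt_gen_pinfty_le (f g : R -> R) c :
  (forall b, c <= b -> ex_RInt f c b) -> (forall b, c <= b -> ex_RInt g c b) ->
  (forall x, c <= x -> 0 <= f x <= g x) ->
  ex_RInt_gen g (at_point c) (Rbar_locally p_infty) ->
  ex_RInt_gen f (at_point c) (Rbar_locally p_infty).
Proof.
  intros Hf Hg Hfg [lg Hlg].
  apply is_RInt_gen_pinfty_lim in Hlg; [| exact Hg].
  destruct (proj1 (filterlim_locally_cauchy (F := Rbar_locally p_infty)
                     (fun b => RInt f c b))) as [l Hl].
  - intros eps.
    destruct (proj1 (filterlim_locally _ _) Hlg (pos_div_2 eps)) as [M HM].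
    exists (fun b => Rmax c M < b). split; [exists (Rmax c M); auto |].
    assert (Hcauchy : forall u v, Rmax c M < u <= v ->
              Rabs (RInt f c v - RInt f c u) < eps).
    { intros u v Huv.
      assert (Hc := Rmax_l c M). assert (HMc := Rmax_r c M).
      assert (Hu := HM u ltac:(lra)). assert (Hv := HM v ltac:(lra)).
      change (Rabs (RInt g c u - lg) < eps / 2) in Hu.
      change (Rabs (RInt g c v - lg) < eps / 2) in Hv.
      apply Rabs_lt_between' in Hu, Hv.
      assert (Hinc := RInt_increment_le f g c u v Hf Hg Hfg ltac:(lra)).
      rewrite Rabs_right; lra. }
    intros u v Hu Hv. change (Rabs (RInt f c v - RInt f c u) < eps).
    destruct (Rle_dec u v).
    + apply Hcauchy. lra.
    + rewrite Rabs_minus_sym. apply Hcauchy. lra.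
  - exists l. apply is_RInt_gen_pinfty_lim; assumption.
Qed.

Lemma ex_RInt_gen_rpow_shifted e : e < -1 ->
  ex_RInt_gen (fun u => rpow (1 + u) e) (at_point 0) (Rbar_locally p_infty).
Proof.
  intros He.
  set (F := fun u => rpow (1 + u) (e + 1) / (e + 1)).
  exists (0 * / (e + 1) - F 0).
  apply is_RInt_gen_pinfty_lim.
  { intros b Hb. apply (ex_RInt_continuous (V := R_CompleteNormedModule)).
    intros u Hu. rewrite Rmin_left, Rmax_right in Hu by lra.
    apply continuous_rpow_shift. lra. }
  apply filterlim_ext_loc with (fun b => F b - F 0).
  { exists 0. intros b Hb. symmetry. apply is_RInt_unique.
    apply (is_RInt_derive (V := R_CompleteNormedModule) F).
    - intros u Hu. rewrite Rmin_left, Rmax_right in Hu by lra.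
      apply is_derive_rpow_shifted; lra.
    - intros u Hu. rewrite Rmin_left, Rmax_right in Hu by lra.
      apply continuous_rpow_shift. lra. }
  change (is_lim (fun b => F b - F 0) p_infty (0 * / (e + 1) - F 0)).
  apply (is_lim_minus _ _ _ (0 * / (e + 1)) (F 0)); [| apply is_lim_const | reflexivity].
  apply (is_lim_scal_r (fun b => rpow (1 + b) (e + 1)) (/ (e + 1)) p_infty 0).
  apply is_lim_rpow_shifted. lra.
Qed.

Lemma RInt_reflect (f : R -> R) x : ex_RInt f 0 x ->
  RInt (fun v => f (x - v)) 0 x = RInt f 0 x.
Proof.
  intros Hf. apply is_RInt_unique.
  assert (Hlin : is_RInt f (-1 * x + x) (-1 * 0 + x) (RInt f 0 x)).
  { replace (-1 * x + x) with 0 by ring. replace (-1 * 0 + x) with x by ring.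
    apply (RInt_correct (V := R_CompleteNormedModule)), Hf. }
  apply is_RInt_comp_lin, is_RInt_swap, is_RInt_opp in Hlin.
  rewrite opp_opp in Hlin.
  apply is_RInt_ext with (2 := Hlin). intros v _.
  unfold scal, opp; simpl; unfold mult; simpl.
  replace (-1 * v + x) with (x - v) by ring. ring.
Qed.

Definition kernel (a e z u : R) : R := rpow u a * rpow (z + u) e.

Lemma kernel_ge0 a e z u : 0 <= kernel a e z u.
Proof. apply Rmult_le_pos; apply rpow_ge0. Qed.

Lemma continuous_kernel a e z u : 0 < a -> 0 < z + u -> continuous (kernel a e z) u.
Proof.
  intros Ha Hzu.
  apply (continuous_mult (fun v => rpow v a) (fun v => rpow (z + v) e)).
  - apply continuous_rpow, Ha.
  - apply continuous_rpow_shift, Hzu.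
Qed.

Lemma ex_RInt_kernel a e z p q : 0 < a -> 0 < z -> 0 <= p -> 0 <= q ->
  ex_RInt (kernel a e z) p q.
Proof.
  intros Ha Hz Hp Hq. apply (ex_RInt_continuous (V := R_CompleteNormedModule)).
  intros u Hu. apply continuous_kernel; [exact Ha |].
  assert (Rmin p q >= 0) by (apply Rmin_case; lra). lra.
Qed.

Lemma kernel_scale a e d w : 0 < d ->
  kernel a e d (d * w) = rpow d (a + e) * kernel a e 1 w.
Proof.
  intros Hd. unfold kernel.
  replace (d + d * w) with (d * (1 + w)) by ring.
  rewrite !rpow_mult_distr, rpow_plus by exact Hd. ring.
Qed.

Lemma kernel_le_rpow_shifted a u : 0 <= a -> 0 <= u ->
  kernel a (a - 2) 1 u <= rpow (1 + u) (2 * a - 2).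
Proof.
  intros Ha Hu. unfold kernel.
  replace (2 * a - 2) with (a + (a - 2)) by ring.
  rewrite rpow_plus by lra.
  apply Rmult_le_compat_r; [apply rpow_ge0 | apply rpow_le; lra].
Qed.

Section AffineParameter.

Variables a c k : R.
Hypothesis Ha : 0 < a.

Lemma continuity_2d_pt_affine x t : continuity_2d_pt (fun u v => c + k * u + v) x t.
Proof.
  repeat apply continuity_2d_pt_plus; try apply continuity_2d_pt_mult;
    auto using continuity_2d_pt_const, continuity_2d_pt_id1, continuity_2d_pt_id2.
Qed.

Lemma locally_2d_affine_pos x t : 0 < c + k * x + t ->
  locally_2d (fun u v => 0 < c + k * u + v) x t.
Proof.
  intros Hpos.
  destruct (continuity_2d_pt_affine x t (mkposreal _ Hpos)) as [d Hd].
  exists d. intros u v Hu Hv. specialize (Hd u v Hu Hv). simpl in Hd.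
  apply Rabs_lt_between' in Hd. lra.
Qed.

Lemma locally_affine_pos x : 0 < c + k * x -> locally x (fun y => 0 < c + k * y).
Proof.
  intros Hx.
  assert (Hcont : continuous (fun y => c + k * y) x).
  { apply (ex_derive_continuous (K := R_AbsRing) (V := R_NormedModule)).
    auto_derive. exact I. }
  exact (Hcont _ (locally_gt 0 _ Hx)).
Qed.

Lemma is_derive_kernel_affine e x v : 0 < c + k * x + v ->
  is_derive (fun y => kernel a e (c + k * y) v) x (k * e * kernel a (e - 1) (c + k * x) v).
Proof.
  intros Hpos. unfold kernel.
  replace (k * e * (rpow v a * rpow (c + k * x + v) (e - 1)))
    with (rpow v a * (k * (e * rpow (c + k * x + v) (e - 1)))) by ring.
  apply is_derive_scal.
  apply (is_derive_comp (fun y => rpow y e) (fun y => c + k * y + v)).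
  - apply is_derive_rpow, Hpos.
  - auto_derive; [exact I | ring].
Qed.

Lemma continuity_2d_pt_kernel_affine e x t : 0 < c + k * x + t ->
  continuity_2d_pt (fun u v => kernel a e (c + k * u) v) x t.
Proof.
  intros Hpos. unfold kernel. apply continuity_2d_pt_mult.
  - apply (continuity_1d_2d_pt_comp (fun y => rpow y a) (fun u v => v)).
    + apply continuity_pt_filterlim, continuous_rpow, Ha.
    + apply continuity_2d_pt_id2.
  - apply (continuity_1d_2d_pt_comp (fun y => rpow y e) (fun u v => c + k * u + v)).
    + apply continuity_pt_filterlim, continuous_rpow_pos, Hpos.
    + apply continuity_2d_pt_affine.
Qed.

Lemma continuity_2d_pt_Derive_kernel_affine e x t : 0 < c + k * x + t ->
  continuity_2d_pt (fun u v => Derive (fun y => kernel a e (c + k * y) v) u) x t.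
Proof.
  intros Hpos.
  apply continuity_2d_pt_ext_loc with (fun u v => k * e * kernel a (e - 1) (c + k * u) v).
  - apply locally_2d_impl with (2 := locally_2d_affine_pos x t Hpos).
    apply locally_2d_forall. intros u v Huv.
    symmetry. apply is_derive_unique, is_derive_kernel_affine, Huv.
  - apply continuity_2d_pt_mult; [apply continuity_2d_pt_const |].
    apply continuity_2d_pt_kernel_affine, Hpos.
Qed.

Lemma RInt_Derive_kernel_affine e x p q : 0 < c + k * x -> 0 <= p -> 0 <= q ->
  RInt (fun t => Derive (fun y => kernel a e (c + k * y) t) x) p q
  = k * e * RInt (kernel a (e - 1) (c + k * x)) p q.
Proof.
  intros Hx Hp Hq.
  assert (Hmin : 0 <= Rmin p q) by (apply Rmin_case; assumption).
  transitivity (RInt (fun t => k * e * kernel a (e - 1) (c + k * x) t) p q).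
  - apply RInt_ext. intros t Ht.
    apply is_derive_unique, is_derive_kernel_affine. lra.
  - apply (RInt_scal (V := R_CompleteNormedModule)), ex_RInt_kernel; assumption.
Qed.

Lemma is_derive_RInt_kernel_affine e x p q : 0 < c + k * x -> 0 <= p -> 0 <= q ->
  is_derive (fun y => RInt (kernel a e (c + k * y)) p q) x
    (k * e * RInt (kernel a (e - 1) (c + k * x)) p q).
Proof.
  intros Hx Hp Hq.
  assert (Hmin : 0 <= Rmin p q) by (apply Rmin_case; assumption).
  rewrite <- RInt_Derive_kernel_affine by assumption.
  apply (is_derive_RInt_param (fun y t => kernel a e (c + k * y) t)).
  - apply filter_imp with (2 := locally_affine_pos x Hx). intros y Hy t Ht.
    eexists. apply is_derive_kernel_affine. lra.
  - intros t Ht. apply continuity_2d_pt_Derive_kernel_affine. lra.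
  - apply filter_imp with (2 := locally_affine_pos x Hx). intros y Hy.
    apply ex_RInt_kernel; assumption.
Qed.

Lemma is_derive_RInt_kernel_affine_upper e x : 0 < x -> 0 < c + k * x ->
  is_derive (fun y => RInt (kernel a e (c + k * y)) 0 y) x
    (k * e * RInt (kernel a (e - 1) (c + k * x)) 0 x + kernel a e (c + k * x) x).
Proof.
  intros Hx Hcx.
  rewrite <- RInt_Derive_kernel_affine, <- (Rmult_1_r (kernel a e (c + k * x) x)) by lra.
  assert (Hhalf : 0 < x / 2) by lra.
  assert (Hloc := locally_affine_pos x Hcx).
  apply (is_derive_RInt_param_bound_comp_aux3 (fun y t => kernel a e (c + k * y) t) 0 (fun y => y)).
  - apply filter_imp with (2 := Hloc). intros y Hy. apply ex_RInt_kernel; lra.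
  - exists (mkposreal _ Hhalf). apply filter_imp with (2 := Hloc). intros y Hy.
    apply ex_RInt_kernel; simpl; lra.
  - apply (is_derive_id (K := R_AbsRing)).
  - exists (mkposreal _ Hhalf). apply filter_imp with (2 := Hloc). intros y Hy t Ht.
    simpl in Ht. rewrite Rmin_left, Rmax_right in Ht by lra.
    eexists. apply is_derive_kernel_affine. lra.
  - intros t Ht. rewrite Rmin_left, Rmax_right in Ht by lra.
    apply continuity_2d_pt_Derive_kernel_affine. lra.
  - apply locally_2d_impl with (2 := locally_2d_affine_pos x x ltac:(lra)).
    apply locally_2d_forall. intros u v Huv.
    apply continuity_2d_pt_Derive_kernel_affine, Huv.
  - apply continuity_pt_filterlim, continuous_kernel; lra.
Qed.

End AffineParameter.

Lemma ex_RInt_gen_kernel a : 0 < a < 1/2 ->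
  ex_RInt_gen (kernel a (a - 2) 1) (at_point 0) (Rbar_locally p_infty).
Proof.
  intros Ha.
  apply ex_RInt_gen_pinfty_le with (fun u => rpow (1 + u) (2 * a - 2)).
  - intros b Hb. apply ex_RInt_kernel; lra.
  - intros b Hb. apply (ex_RInt_continuous (V := R_CompleteNormedModule)).
    intros u Hu. rewrite Rmin_left, Rmax_right in Hu by lra.
    apply continuous_rpow_shift. lra.
  - intros u Hu. split; [apply kernel_ge0 | apply kernel_le_rpow_shifted; lra].
  - apply ex_RInt_gen_rpow_shifted. lra.
Qed.

Lemma RInt_kernel_scale a e d b : 0 < a -> 0 < d -> 0 <= b ->
  RInt (kernel a e d) 0 b = rpow d (a + e + 1) * RInt (kernel a e 1) 0 (b / d).
Proof.
  intros Ha Hd Hb.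
  assert (Hbd : 0 <= b / d) by (apply Rdiv_le_0_compat; lra).
  assert (Hlin := RInt_comp_lin (V := R_CompleteNormedModule) (kernel a e d) d 0 0 (b / d)).
  replace (d * 0 + 0) with 0 in Hlin by ring.
  replace (d * (b / d) + 0) with b in Hlin by (field; lra).
  rewrite <- Hlin by (apply ex_RInt_kernel; lra).
  rewrite <- (RInt_scal (V := R_CompleteNormedModule)) by (apply ex_RInt_kernel; lra).
  apply RInt_ext. intros w _. unfold scal; simpl; unfold mult; simpl.
  rewrite Rplus_0_r, kernel_scale, !rpow_plus, rpow_1 by lra. ring.
Qed.

Lemma is_RInt_gen_kernel_scale a e d J : 0 < a -> 0 < d ->
  is_RInt_gen (kernel a e 1) (at_point 0) (Rbar_locally p_infty) J ->
  is_RInt_gen (kernel a e d) (at_point 0) (Rbar_locally p_infty) (rpow d (a + e + 1) * J).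
Proof.
  intros Ha Hd HJ.
  apply is_RInt_gen_pinfty_lim in HJ; [| intros b Hb; apply ex_RInt_kernel; lra].
  apply is_RInt_gen_pinfty_lim; [intros b Hb; apply ex_RInt_kernel; lra |].
  apply filterlim_ext_loc with (fun b => rpow d (a + e + 1) * RInt (kernel a e 1) 0 (b / d)).
  { exists 0. intros b Hb. symmetry. apply RInt_kernel_scale; lra. }
  apply (filterlim_comp _ _ _ (fun b => RInt (kernel a e 1) 0 (b / d))
           (fun z => rpow d (a + e + 1) * z) _ (locally J)).
  - apply (filterlim_comp _ _ _ (fun b => b / d) (fun b => RInt (kernel a e 1) 0 b) _
             (Rbar_locally p_infty)); [| exact HJ].
    intros P [M HM]. exists (M * d). intros b Hb. apply HM.
    apply Rmult_lt_reg_r with d; [exact Hd |]. unfold Rdiv. rewrite Rmult_assoc, Rinv_l; lra.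
  - apply (ex_derive_continuous (K := R_AbsRing) (V := R_NormedModule)). auto_derive. exact I.
Qed.

(** * Derivatives of the covariance *)

Section RLCovariance.

Variable H : R.
Hypothesis hH : 1/2 < H.
Local Notation a := (H - 1/2).

Lemma RLcov_kernel x s' : 0 < x < s' -> RLcov H x s' = RInt (kernel a a (s' - x)) 0 x.
Proof.
  intros Hx. unfold RLcov. rewrite Rmin_left by lra.
  rewrite <- (RInt_reflect (kernel a a (s' - x))) by (apply ex_RInt_kernel; lra).
  apply RInt_ext. intros v _. unfold kernel.
  replace (s' - x + (x - v)) with (s' - v) by ring. reflexivity.
Qed.

Lemma is_derive_RLcov_l r s' : 0 < r < s' ->
  is_derive (fun x => RLcov H x s') r
    (rpow r a * rpow s' a - a * RInt (kernel a (a - 1) (s' - r)) 0 r).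
Proof.
  intros Hr.
  apply is_derive_ext_loc with (fun x => RInt (kernel a a (s' + -1 * x)) 0 x).
  { assert (Hloc := filter_and (F := locally r) _ _
                      (locally_gt 0 r ltac:(lra)) (locally_lt s' r ltac:(lra))).
    apply filter_imp with (2 := Hloc). intros x Hx. rewrite RLcov_kernel by lra.
    replace (s' + -1 * x) with (s' - x) by ring. reflexivity. }
  replace (rpow r a * rpow s' a - a * RInt (kernel a (a - 1) (s' - r)) 0 r)
    with (-1 * a * RInt (kernel a (a - 1) (s' + -1 * r)) 0 r + kernel a a (s' + -1 * r) r).
  - apply is_derive_RInt_kernel_affine_upper; lra.
  - unfold kernel at 2. replace (s' + -1 * r) with (s' - r) by ring.
    replace (s' - r + r) with s' by ring. ring.
Qed.

Lemma is_derive_Derive_RLcov_l r s : 0 < r < s ->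
  is_derive (fun s' => Derive (fun x => RLcov H x s') r) s
    (a * rpow r a * rpow s (a - 1) - a * (a - 1) * RInt (kernel a (a - 2) (s - r)) 0 r).
Proof.
  intros Hr.
  apply is_derive_ext_loc
    with (fun s' => rpow r a * rpow s' a - a * RInt (kernel a (a - 1) (- r + 1 * s')) 0 r).
  { apply filter_imp with (2 := locally_gt r s ltac:(lra)). intros s' Hs'.
    assert (Hd := is_derive_RLcov_l r s' ltac:(lra)).
    apply is_derive_unique in Hd.
    replace (- r + 1 * s') with (s' - r) by ring. exact (eq_sym Hd). }
  replace (a * rpow r a * rpow s (a - 1) - a * (a - 1) * RInt (kernel a (a - 2) (s - r)) 0 r)
    with (rpow r a * (a * rpow s (a - 1))
          - a * (1 * (a - 1) * RInt (kernel a (a - 1 - 1) (- r + 1 * s)) 0 r)).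
  - apply (is_derive_minus (K := R_AbsRing) (V := R_NormedModule)); apply is_derive_scal.
    + apply is_derive_rpow. lra.
    + apply is_derive_RInt_kernel_affine; lra.
  - replace (a - 1 - 1) with (a - 2) by ring. replace (- r + 1 * s) with (s - r) by ring. ring.
Qed.

End RLCovariance.

Theorem lemmaA1 (H r s : R) (hH1 : 1/2 < H) (hH2 : H < 1)
  (hr : 0 < r) (hrs : r < s) :
  (forall s' : R, r < s' -> ex_derive (fun x => RLcov H x s') r) /\
  is_derive (fun s' => Derive (fun x => RLcov H x s') r) s
    (cst1 H * rpow r (H - 1/2) * rpow s (H - 3/2)
     + cst2 H * rpow (s - r) (2 * H - 2)
     + cst3 H * RInt_gen (fun v => rpow v (H - 1/2) * rpow (s - r + v) (H - 5/2))
                       (at_point r) (Rbar_locally p_infty)).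
Proof.
  split; [intros s' Hs'; eexists; apply is_derive_RLcov_l; lra |].
  unfold cst1, cst2, cst3.
  replace (H - 3/2) with (H - 1/2 - 1) by lra.
  replace (H - 5/2) with (H - 1/2 - 2) by lra.
  replace (2 * H - 2) with (H - 1/2 + (H - 1/2 - 2) + 1) by lra.
  set (a := H - 1/2).
  destruct (ex_RInt_gen_kernel a ltac:(unfold a; lra)) as [J HJ].
  assert (Hscale := is_RInt_gen_kernel_scale a (a - 2) (s - r) J ltac:(unfold a; lra) ltac:(lra) HJ).
  assert (Htail := is_RInt_gen_pinfty_tail _ 0 r _ Hscale ltac:(apply ex_RInt_kernel; unfold a; lra)).
  fold (kernel a (a - 2) 1) (kernel a (a - 2) (s - r)).
  rewrite (is_RInt_gen_unique _ _ HJ), (is_RInt_gen_unique _ _ Htail).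
  assert (HD := is_derive_Derive_RLcov_l H hH1 r s (conj hr hrs)). fold a in HD.
  match goal with |- is_derive _ _ ?v => replace v with
    (a * rpow r a * rpow s (a - 1) - a * (a - 1) * RInt (kernel a (a - 2) (s - r)) 0 r) by ring end.
  exact HD.
Qed.
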